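(* Let $L$ be a framed oriented link in $S^3$ with $n$ components and let $\mathbb D$ be a $(1,1)$-tangle diagram whose closure, with blackboard framing, is $L$, with associated diagram invariant $G_{\mathbb D}$. Then for each $r\geq1$, $$G_{\mathbb D}(r)\in\frac{1}{(q^4x_1^2;q^2)_{r-1}}\prod_{i,j=1}^n z_{ij}^{C_{ij}}\;\mathbb{C}[x_1^{\pm1},\dots,x_n^{\pm1},q^{\pm1}],$$ where $(C_{ij})$ is the linking matrix of $L$ ($C_{ii}$ being the framing of the $i$-th component) and the product runs over ordered pairs $(i,j)$.
   Context: Notation: $(x;p)_k=\prod_{j=0}^{k-1}(1-xp^j)$ for $k>0$, $(x;p)_0=1$, $(x;p)_k=0$ for $k<0$; $\delta_{a,b}=1$ if $a=b$ and $0$ otherwise; $\vartheta_{a\leq b}=1$ if $a\leq b$ and $0$ otherwise. Let $\mathbb V_n=\mathbb{C}(q^{1/2},x_1^{1/2},\dots,x_n^{1/2},\{z_{ij}\}_{i,j=1}^n)$, with $z_{ij}=z_{ji}$, a field of rational functions in formal variables. Diagram invariant: $\mathbb D$ is a diagram of an oriented $(1,1)$-tangle with $n$ components, drawn so that at every crossing both strands run downward; its components are assigned variables $x_1,\dots,x_n$, with $x_1$ on the open component. An arc is a segment of $\mathbb D$ from one crossing (or endpoint) to the next, regardless of over/under; arcs are labeled by integer variables $a_1,\dots,a_m$, with $a_1,a_m$ the arcs at the two open ends. To each building block assign a function of $(a_1,\dots,a_m,r)\in\mathbb{Z}^{m+1}$ with values in $\mathbb V_n$: at a crossing where the strand of component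 $i$ enters along arc $a$ and leaves along arc $c$, and the strand of component $j$ enters along arc $b$ and leaves along arc $d$, a positive crossing contributes $$\delta_{a-c,d-b}\vartheta_{c\leq a}\vartheta_{d\geq b}(-x_i)^{a-c}q^{(c-a)(a+b+1)+2cd}z_{ij}x_i^{-d}x_j^{-c}\frac{(q^{2(a-1)}x_i^{-2};q^{-2})_{a-c}(q^{2(b+1)};q^2)_{a-c}}{(q^{-2};q^{-2})_{a-c}}$$ and a negative crossing contributes $$\delta_{a-c,d-b}\vartheta_{c\leq a}\vartheta_{d\geq b}(-x_i)^{a-c}q^{(c-a)(a+b-1)-2ab}z_{ij}^{-1}x_i^{b}x_j^{a}\frac{(q^{2(a-1)}x_i^{-2};q^{-2})_{a-c}(q^{2(b+1)};q^2)_{a-c}}{(q^{2};q^{2})_{a-c}};$$ a cap (local maximum) on arc $a$ of component $i$ contributes $1$ if it corresponds to the evaluation $V^*\otimes V\to\mathbb{C}$, $f\otimes w\mapsto f(w)$, and $q^{2a(r-1)}x_i^{1-r}$ for the other orientation; a cup (local minimum) on arc $a$ of component $i$ contributes $1$ if it corresponds to the coevaluation $\mathbb{C}\to V\otimes V^*$, and $q^{2a(1-r)}x_i^{r-1}$ for the other orientation. Put $\mathsf d[x_1]=(-x_1)^{r-1}q^{\frac12r(r+1)-1}\frac{1}{(q^4x_1^2;q^2)_{r-1}}$. Let $G^\times_{\mathbb D}(a_1,\dots,a_m;r)$ be the product of $\mathsf d[x_1]$, $\delta_{a_1,0}\delta_{a_m,0}$ and the functions of all crossings, cups and caps, and $G_{\mathbb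 D}(r)=\sum_{(a_1,\dots,a_m)\in[0,r-1]^m}G^\times_{\mathbb D}(a_1,\dots,a_m;r)\in\mathbb V_n$. *)

From HB Require Import structures.
From mathcomp Require Import all_boot all_algebra.
From mathcomp Require Import Rstruct complex.
From mathcomp Require Import mpoly.
From mathcomp Require Import fraction.
Set Implicit Arguments. Unset Strict Implicit. Unset Printing Implicit Defensive.
Import GRing.Theory.
Local Open Scope ring_scope.
Local Open Scope quotient_scope.

Definition CC : fieldType := complex Rdefinitions.R.

(* Variables: index 0 is q^{1/2}; index 1+i is x_{i+1}^{1/2} (i < n);
   index 1+n+(min i j)*n+(max i j) is z_{ij} = z_{ji}. *)
Definition nvars (n : nat) : nat := (n + n * n).+1.
Definition Vn (n : nat) : fieldType := {fraction {mpoly CC[nvars n]}}.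

Definition var (n k : nat) : Vn n :=
  FracField.tofrac ('X_(inord k) : {mpoly CC[nvars n]}).

Definition qh (n : nat) : Vn n := var n 0.
Definition q (n : nat) : Vn n := qh n ^+ 2.
(* x n i is the variable x_{i+1} (0-based indexing of components). *)
Definition xh (n i : nat) : Vn n := var n i.+1.
Definition x (n i : nat) : Vn n := xh n i ^+ 2.
Definition z (n i j : nat) : Vn n := var n (1 + n + minn i j * n + maxn i j).

Definition poch (F : fieldType) (a p : F) (k : int) : F :=
  match k with
  | Posz k' => \prod_(j < k') (1 - a * p ^+ j)
  | Negz _ => 0
  end.

(* The Laurent polynomial ring C[x_1^{+-1},..,x_n^{+-1},q^{+-1}] inside V_n:
   f = P / (q x_1 ... x_n)^e with P a polynomial in q = (q^{1/2})^2 and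
   x_i = (x_i^{1/2})^2 only. *)
Definition in_qx_polys (n : nat) (P : {mpoly CC[nvars n]}) : Prop :=
  forall m, m \in msupp P ->
    forall k : 'I_(nvars n),
      if (k < n.+1)%N then ~~ odd (m k) else m k == 0%N.

Definition laurent (n : nat) (f : Vn n) : Prop :=
  exists (P : {mpoly CC[nvars n]}) (e : nat),
    in_qx_polys P /\ f = FracField.tofrac P / (q n * \prod_(i < n) x n i) ^+ e.

(* A diagram is a word of elementary events read from top to bottom.
   Between consecutive events there is a horizontal level crossed by
   finitely many strands, numbered 0,1,.. from left to right; each strand
   is oriented downward (true) or upward (false).
   - Xing k s : a crossing of the strands at positions k and k+1, both of
       which must run downward; s = true for a positive crossing, false for
       a negative one.  With both strands downward, in a positive crossing
       the over-strand goes from top-right to bottom-left, in a negative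
       crossing from top-left to bottom-right.
   - Cap k ld : a local maximum creating two new strands at positions k and
       k+1; ld = true iff the left new strand is oriented downward.
   - Cup k    : a local minimum joining the strands at positions k and k+1,
       which must have opposite orientations. *)
Inductive event : Type :=
| Xing of nat & bool
| Cap of nat & bool
| Cup of nat.

Definition ev0 : event := Cup 0.

Definition stepT (st : seq bool) (e : event) : seq bool :=
  match e with
  | Xing _ _ => st
  | Cap k ld => take k st ++ [:: ld; ~~ ld] ++ drop k st
  | Cup k => take k st ++ drop k.+2 st
  end.

(* orientations of the strands at level l (after the first l events);
   a (1,1)-tangle starts with a single downward strand *)
Definition state (D : seq event) (l : nat) : seq bool :=
  foldl stepT [:: true] (take l D).

Definition width (D : seq event) (l : nat) : nat := size (state D l).

Definition event_ok (st : seq bool) (e : event) : bool :=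
  match e with
  | Xing k _ => [&& (k.+1 < size st)%N, nth false st k & nth false st k.+1]
  | Cap k _ => (k <= size st)%N
  | Cup k => (k.+1 < size st)%N && (nth false st k != nth false st k.+1)
  end.

(* D is a diagram of an oriented (1,1)-tangle all of whose crossings have
   both strands running downward, the open strand running downward from
   the top endpoint to the bottom endpoint. *)
Definition valid (D : seq event) : bool :=
  [forall l : 'I_(size D), event_ok (state D l) (nth ev0 D l)]
  && (state D (size D) == [:: true]).

(* strand segments: (level, position) *)
Definition seg (D : seq event) : finType :=
  {p : 'I_(size D).+1 * 'I_(size D).*2.+1 | (p.2 < width D p.1)%N}.

Definition lv (D : seq event) (s : seg D) : nat := (sval s).1.
Definition ps (D : seq event) (s : seg D) : nat := (sval s).2.

(* two segments are consecutive pieces of the same arc (no crossing in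
   between: passing an event not involving the strand, or going through a
   cap or a cup) *)
Definition arc_adj (D : seq event) (s t : seg D) : bool :=
  [|| (lv t == (lv s).+1) &&
      match nth ev0 D (lv s) with
      | Xing k _ => ((ps s < k)%N || (k.+1 < ps s)%N) && (ps t == ps s)
      | Cap k _ => ((ps s < k)%N && (ps t == ps s))
                   || ((k <= ps s)%N && (ps t == (ps s).+2))
      | Cup k => ((ps s < k)%N && (ps t == ps s))
                 || ((k.+1 < ps s)%N && (ps t == (ps s).-2))
      end,
      [&& lv t == lv s, (0 < lv s)%N &
       match nth ev0 D (lv s).-1 with
       | Cap k _ => (ps s == k) && (ps t == k.+1)
       | _ => false
       end]
    | [&& lv t == lv s, (lv s < size D)%N &
       match nth ev0 D (lv s) with
       | Cup k => (ps s == k) && (ps t == k.+1)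
       | _ => false
       end]].

(* two segments are consecutive pieces of the same strand (arcs, plus
   going straight through crossings) *)
Definition strand_adj (D : seq event) (s t : seg D) : bool :=
  arc_adj s t ||
  (lv t == (lv s).+1) &&
  match nth ev0 D (lv s) with
  | Xing k _ => ((ps s == k) && (ps t == k.+1)) || ((ps s == k.+1) && (ps t == k))
  | _ => false
  end.

Definition symc (T : Type) (r : rel T) : rel T := fun a b => r a b || r b a.

Definition same_arc (D : seq event) : rel (seg D) := connect (symc (@arc_adj D)).
Definition same_comp (D : seq event) : rel (seg D) := connect (symc (@strand_adj D)).

Definition is_top (D : seq event) (s : seg D) : bool := (lv s == 0%N) && (ps s == 0%N).

(* comp assigns to every segment the index (0-based) of its component:
   the map from components to 'I_n is a bijection and the open component
   gets index 0 (variable x_1). *)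
Definition comp_ok (n : nat) (D : seq event) (comp : {ffun seg D -> 'I_n}) : bool :=
  [&& [forall s, forall t, (comp s == comp t) == same_comp s t],
      [forall i : 'I_n, exists s, comp s == i] &
      [forall s, is_top s ==> (val (comp s) == 0%N)]].

Definition labAt (D : seq event) (r : nat) (lam : {ffun seg D -> 'I_r})
  (l p : nat) : int :=
  match [pick s : seg D | (lv s == l) && (ps s == p)] with
  | Some s => (val (lam s))%:Z
  | None => 0
  end.

Definition compAt (n : nat) (D : seq event) (comp : {ffun seg D -> 'I_n})
  (l p : nat) : nat :=
  match [pick s : seg D | (lv s == l) && (ps s == p)] with
  | Some s => val (comp s)
  | None => 0%N
  end.

Section Blocks.
Variable n : nat.
Local Notation q := (q n).
Local Notation x := (x n).
Local Notation z := (z n).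

Definition ind (b : bool) : Vn n := if b then 1 else 0.

(* crossing where strand of component i enters along a, leaves along c,
   strand of component j enters along b and leaves along d *)
Definition poscross (i j : nat) (a b c d : int) : Vn n :=
  ind ((a - c == d - b) && (c <= a) && (d >= b)) *
  (- x i) ^ (a - c) * q ^ ((c - a) * (a + b + 1) + 2 * c * d) *
  z i j * x i ^ (- d) * x j ^ (- c) *
  (poch (q ^ (2 * (a - 1)) * x i ^ (-2)) (q ^ (-2)) (a - c) *
   poch (q ^ (2 * (b + 1))) (q ^ 2) (a - c) /
   poch (q ^ (-2)) (q ^ (-2)) (a - c)).

Definition negcross (i j : nat) (a b c d : int) : Vn n :=
  ind ((a - c == d - b) && (c <= a) && (d >= b)) *
  (- x i) ^ (a - c) * q ^ ((c - a) * (a + b - 1) - 2 * a * b) *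
  (z i j)^-1 * x i ^ b * x j ^ a *
  (poch (q ^ (2 * (a - 1)) * x i ^ (-2)) (q ^ (-2)) (a - c) *
   poch (q ^ (2 * (b + 1))) (q ^ 2) (a - c) /
   poch (q ^ 2) (q ^ 2) (a - c)).

Definition dfac (r : nat) : Vn n :=
  (- x 0) ^ (r%:Z - 1) * q ^ (((r * r.+1) %/ 2)%:Z - 1) /
  poch (q ^ 4 * x 0 ^ 2) (q ^ 2) (r%:Z - 1).
End Blocks.

(* Weight of the event number l (between level l and level l+1).
   At a crossing the strand of component i is the over-strand.
   A cap (local maximum) corresponds to the evaluation V*⊗V -> C iff its
   left strand is oriented upward; a cup (local minimum) corresponds to the
   coevaluation C -> V⊗V* iff its left strand is oriented downward
   (downward strands carry V). *)
Definition ev_weight (n : nat) (D : seq event) (comp : {ffun seg D -> 'I_n})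
  (r : nat) (lam : {ffun seg D -> 'I_r}) (l : nat) : Vn n :=
  let lab := labAt lam in
  let cmp := compAt comp in
  match nth ev0 D l with
  | Xing k true =>
      poscross n (cmp l k.+1) (cmp l k)
        (lab l k.+1) (lab l k) (lab l.+1 k) (lab l.+1 k.+1)
  | Xing k false =>
      negcross n (cmp l k) (cmp l k.+1)
        (lab l k) (lab l k.+1) (lab l.+1 k.+1) (lab l.+1 k)
  | Cap k ld =>
      if ld then q n ^ (2 * lab l.+1 k * (r%:Z - 1)) * x n (cmp l.+1 k) ^ (1 - r%:Z)
      else 1
  | Cup k =>
      if nth false (state D l) k then 1
      else q n ^ (2 * lab l k * (1 - r%:Z)) * x n (cmp l k) ^ (r%:Z - 1)
  end.

Definition Gx (n : nat) (D : seq event) (comp : {ffun seg D -> 'I_n})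
  (r : nat) (lam : {ffun seg D -> 'I_r}) : Vn n :=
  dfac n r * ind n ((labAt lam 0 0 == 0) && (labAt lam (size D) 0 == 0)) *
  \prod_(l < size D) ev_weight comp lam l.

(* An arc labelling (a_1,..,a_m) in [0,r-1]^m is the same as a labelling
   of the segments that is constant along arcs. *)
Definition arc_labelling (D : seq event) (r : nat) (lam : {ffun seg D -> 'I_r}) : bool :=
  [forall s, forall t, same_arc s t ==> (lam s == lam t)].

Definition G (n : nat) (D : seq event) (comp : {ffun seg D -> 'I_n}) (r : nat) : Vn n :=
  \sum_(lam : {ffun seg D -> 'I_r} | arc_labelling lam) Gx comp lam.

(* Linking matrix of the closure L (blackboard framing): C_ij is the sum of
   the signs of the crossings where component i passes over component j;
   C_ii is the writhe of component i, i.e. its blackboard framing. *)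
Definition linking (n : nat) (D : seq event) (comp : {ffun seg D -> 'I_n})
  (i j : nat) : int :=
  \sum_(l < size D)
    match nth ev0 D l with
    | Xing k true =>
        if (compAt comp l k.+1 == i) && (compAt comp l k == j) then 1 else 0
    | Xing k false =>
        if (compAt comp l k == i) && (compAt comp l k.+1 == j) then -1 else 0
    | _ => 0
    end.

From HB Require Import structures.
From mathcomp Require Import all_boot all_algebra.
From mathcomp Require Import Rstruct complex.
From mathcomp Require Import mpoly.
From mathcomp Require Import fraction.
From mathcomp Require Import ring zify.
Import GRing.Theory.
Local Open Scope ring_scope.

(* Every building block of G_D(r) is a Laurent polynomial in q and the x_i,
   except for the single factor z_ij^(+-1) of each crossing, and the
   denominators (q^2;q^2)_k and (q^-2;q^-2)_k.  The latter are absorbed by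
   the numerator (q^(2(b+1));q^2)_k, since their ratio is a Gaussian binomial
   coefficient in q^2 (up to a monomial), hence a polynomial by q-Pascal's
   rule.  So each summand G^x_D(a;r) is 1/(q^4 x_1^2;q^2)_(r-1), coming from
   d[x_1], times the product of the z-factors of all crossings, which is
   prod z_ij^C_ij, times a Laurent polynomial. *)

Section Pochhammer.
Context {F : fieldType}.
Implicit Types (a p Q : F) (k : nat).

Lemma pochSr a p k : poch a p k.+1 = poch a p k * (1 - a * p ^+ k).
Proof. by rewrite /poch big_ord_recr. Qed.

Lemma pochSl a p k : poch a p k.+1 = (1 - a) * poch (a * p) p k.
Proof.
rewrite /poch big_ord_recl expr0 mulr1; congr (_ * _).
by apply: eq_bigr => j _; rewrite exprS mulrA.
Qed.

Lemma poch_invE Q k : Q != 0 ->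
  poch Q^-1 Q^-1 k = \prod_(j < k) (- Q ^- j.+1) * poch Q Q k.
Proof.
move=> Q0; rewrite /poch -big_split; apply: eq_bigr => j _ /=.
by rewrite -!exprS exprVn mulrBr mulr1 mulNr mulVf ?expf_neq0 //; ring.
Qed.

End Pochhammer.

Section GaussianBinomial.
Context {F : fieldType} {S : F -> Prop}.
Hypotheses (S0 : S 0) (S1 : S 1).
Hypothesis SD : forall a b, S a -> S b -> S (a + b).
Hypothesis SM : forall a b, S a -> S b -> S (a * b).
Context {Q : F}.
Hypothesis SQ : S Q.

(* [poch (Q ^+ b.+1) Q k / poch Q Q k] is the Gaussian binomial [b+k, k]_Q,
   and [pascal] below is q-Pascal's rule. *)
Lemma poch_gauss_factor (b k : nat) :
  exists2 B, S B & poch (Q ^+ b.+1) Q k = poch Q Q k * B.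
Proof.
have SQX m : S (Q ^+ m) by elim: m => [|m IHm]; rewrite ?expr0 // exprS; apply: SM.
elim: k b => [|k IHk] b; first by exists 1; rewrite // /poch !big_ord0 mulr1.
elim: b => [|b IHb]; first by exists 1; rewrite ?expr1 ?mulr1.
have [B1 SB1 E1] := IHk b.+1.
have [B2 SB2 E2] := IHb.
exists (B1 + Q ^+ k.+1 * B2); first by apply: SD => //; apply: SM.
have pascal : poch (Q ^+ b.+2) Q k.+1 =
    (1 - Q ^+ k.+1) * poch (Q ^+ b.+2) Q k + Q ^+ k.+1 * poch (Q ^+ b.+1) Q k.+1.
  by rewrite pochSr [in RHS]pochSl -exprSr !exprS; ring.
by rewrite pascal E1 E2 pochSr !exprS; ring.
Qed.

Lemma poch_gauss_ratio (b k : nat) : S (poch (Q ^+ b.+1) Q k / poch Q Q k).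
Proof.
have [B SB ->] := poch_gauss_factor b k.
(* when Q is a root of unity the denominator may vanish, and x / 0 = 0 *)
have [->|nz] := eqVneq (poch Q Q k) 0; first by rewrite !mul0r.
by rewrite mulrC mulKf.
Qed.

End GaussianBinomial.

Section LaurentPolynomials.
Variable n : nat.
Local Notation mpolyn := {mpoly CC[nvars n]}.
Local Notation qx_monomial := (q n * \prod_(i < n) x n i).
Implicit Types f g : Vn n.

Lemma in_qx_polysD (P1 P2 : mpolyn) :
  in_qx_polys P1 -> in_qx_polys P2 -> in_qx_polys (P1 + P2).
Proof.
move=> P1qx P2qx m /msuppD_le; rewrite mem_cat => /orP[] m_supp k.
- exact: P1qx.
- exact: P2qx.
Qed.

Lemma in_qx_polysM (P1 P2 : mpolyn) :
  in_qx_polys P1 -> in_qx_polys P2 -> in_qx_polys (P1 * P2).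
Proof.
move=> P1qx P2qx m /msuppM_le /allpairsP[[m1 m2] /= [m1_supp m2_supp ->]] k.
rewrite mnmDE; have := P1qx _ m1_supp k; have := P2qx _ m2_supp k.
by case: ifP => _; [rewrite oddD => /negbTE-> /negbTE-> | move=> /eqP-> /eqP->].
Qed.

Lemma in_qx_polysN (P : mpolyn) : in_qx_polys P -> in_qx_polys (- P).
Proof. by move=> Pqx m; rewrite (perm_mem (msuppN _)); apply: Pqx. Qed.

Lemma in_qx_polysC (c : CC) : in_qx_polys (c%:MP : mpolyn).
Proof.
move=> m; rewrite msuppC; case: (c == 0) => //; rewrite mem_seq1 => /eqP-> k.
by rewrite mnm0E; case: ifP.
Qed.

Lemma in_qx_polys_sqrX (k : nat) : (k < n.+1)%N ->
  in_qx_polys (('X_(inord k) : mpolyn) ^+ 2).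
Proof.
move=> lt_k m; rewrite mpolyXn msuppX mem_seq1 => /eqP-> k'.
rewrite mulmnE mnm1E; case: ifP => [_|ge_k']; first by case: (_ == _).
suff /negbTE-> : @inord (n + n * n) k != k' by [].
apply: contraFN ge_k' => /eqP <-; rewrite inordK // /nvars; lia.
Qed.

Definition qx_poly (f : Vn n) : Prop :=
  exists2 P : mpolyn, in_qx_polys P & f = FracField.tofrac P.

Lemma qx_polyD f g : qx_poly f -> qx_poly g -> qx_poly (f + g).
Proof.
by move=> [P Pqx ->] [Q Qqx ->]; exists (P + Q); rewrite ?tofracD //; apply: in_qx_polysD.
Qed.

Lemma qx_polyM f g : qx_poly f -> qx_poly g -> qx_poly (f * g).
Proof.
by move=> [P Pqx ->] [Q Qqx ->]; exists (P * Q); rewrite ?tofracM //; apply: in_qx_polysM.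
Qed.

Lemma qx_polyN f : qx_poly f -> qx_poly (- f).
Proof. by move=> [P Pqx ->]; exists (- P); rewrite ?tofracN //; apply: in_qx_polysN. Qed.

Lemma qx_poly0 : qx_poly (0 : Vn n).
Proof. by exists 0; [exact: (in_qx_polysC 0) | rewrite tofrac0]. Qed.

Lemma qx_poly1 : qx_poly (1 : Vn n).
Proof. by exists 1; [exact: (in_qx_polysC 1) | rewrite tofrac1]. Qed.

Lemma qx_poly_prod (I : Type) (s : seq I) (P : pred I) (F : I -> Vn n) :
  (forall i, P i -> qx_poly (F i)) -> qx_poly (\prod_(i <- s | P i) F i).
Proof. by move=> FP; apply: big_ind => //; [exact: qx_poly1 | exact: qx_polyM]. Qed.

Lemma qx_polyX f k : qx_poly f -> qx_poly (f ^+ k).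
Proof.
by move=> fP; elim: k => [|k IHk]; rewrite ?exprS; [exact: qx_poly1 | exact: qx_polyM].
Qed.

Lemma qx_poly_sqr_var k : (k < n.+1)%N -> qx_poly (var n k ^+ 2).
Proof.
move=> lt_k; exists (('X_(inord k) : mpolyn) ^+ 2); last by rewrite tofracXn.
exact: in_qx_polys_sqrX.
Qed.

Lemma qx_poly_q : qx_poly (q n).
Proof. exact: qx_poly_sqr_var. Qed.

Lemma qx_poly_x i : (i < n)%N -> qx_poly (x n i).
Proof. by move=> lt_i; apply: qx_poly_sqr_var. Qed.

Lemma var_neq0 k : var n k != 0.
Proof. by rewrite tofrac_eq0 -msupp_eq0 msuppX. Qed.

Lemma q_neq0 : q n != 0.
Proof. by rewrite expf_neq0 ?var_neq0. Qed.

Lemma x_neq0 i : x n i != 0.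
Proof. by rewrite expf_neq0 ?var_neq0. Qed.

Lemma z_neq0 i j : z n i j != 0.
Proof. exact: var_neq0. Qed.

Lemma qx_monomial_neq0 : qx_monomial != 0.
Proof. by rewrite mulf_neq0 ?q_neq0 //; apply/prodf_neq0 => i _; apply: x_neq0. Qed.

Lemma laurentE f : laurent f <-> exists e, qx_poly (f * qx_monomial ^+ e).
Proof.
have u_neq0 e : qx_monomial ^+ e != 0 by rewrite expf_neq0 ?qx_monomial_neq0.
split=> [[P [e [Pqx ->]]] | [e [P Pqx fE]]].
  by exists e, P; rewrite ?mulfVK.
by exists P, e; rewrite -fE mulfK.
Qed.

Lemma laurent_qx_poly f : qx_poly f -> laurent f.
Proof. by move=> fP; apply/laurentE; exists 0%N; rewrite mulr1. Qed.

Lemma laurent0 : laurent (0 : Vn n).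
Proof. exact: laurent_qx_poly qx_poly0. Qed.

Lemma laurent1 : laurent (1 : Vn n).
Proof. exact: laurent_qx_poly qx_poly1. Qed.

Lemma qx_poly_monomialX e : qx_poly (qx_monomial ^+ e).
Proof.
by apply/qx_polyX/qx_polyM/qx_poly_prod => [|i _]; [exact: qx_poly_q | exact: qx_poly_x].
Qed.

Lemma laurentD f g : laurent f -> laurent g -> laurent (f + g).
Proof.
move=> /laurentE[e1 f_qx] /laurentE[e2 g_qx]; apply/laurentE; exists (e1 + e2)%N.
rewrite exprD mulrDl mulrA [qx_monomial ^+ e1 * _]mulrC mulrA.
by apply: qx_polyD; apply: qx_polyM => //; apply: qx_poly_monomialX.
Qed.

Lemma laurentM f g : laurent f -> laurent g -> laurent (f * g).
Proof.
move=> /laurentE[e1 f_qx] /laurentE[e2 g_qx]; apply/laurentE; exists (e1 + e2)%N.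
by rewrite exprD mulrACA; apply: qx_polyM.
Qed.

Lemma laurentN f : laurent f -> laurent (- f).
Proof.
by move=> /laurentE[e f_qx]; apply/laurentE; exists e; rewrite mulNr; apply: qx_polyN.
Qed.

Lemma laurentB f g : laurent f -> laurent g -> laurent (f - g).
Proof. by move=> f_l g_l; apply/laurentD/laurentN. Qed.

Lemma laurent_prod (I : Type) (s : seq I) (P : pred I) (F : I -> Vn n) :
  (forall i, P i -> laurent (F i)) -> laurent (\prod_(i <- s | P i) F i).
Proof. by move=> FP; apply: big_ind => //; [exact: laurent1 | exact: laurentM]. Qed.

Lemma laurent_sum (I : Type) (s : seq I) (P : pred I) (F : I -> Vn n) :
  (forall i, P i -> laurent (F i)) -> laurent (\sum_(i <- s | P i) F i).
Proof. by move=> FP; apply: big_ind => //; [exact: laurent0 | exact: laurentD]. Qed.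

Lemma laurentX f k : laurent f -> laurent (f ^+ k).
Proof.
by move=> fP; elim: k => [|k IHk]; rewrite ?exprS; [exact: laurent1 | exact: laurentM].
Qed.

Lemma laurent_exprz f (m : int) : laurent f -> laurent f^-1 -> laurent (f ^ m).
Proof.
by case: m => k f_l fV_l; rewrite ?NegzE -?exprnN -?exprVn -?exprnP; apply: laurentX.
Qed.

Lemma laurent_qz (m : int) : laurent (q n ^ m).
Proof.
apply: laurent_exprz; first exact/laurent_qx_poly/qx_poly_q.
apply/laurentE; exists 1%N; rewrite expr1 mulKf ?q_neq0 //.
by apply: qx_poly_prod => i _; apply: qx_poly_x.
Qed.

Lemma laurent_xz i (m : int) : (i < n)%N -> laurent (x n i ^ m).
Proof.
move=> lt_i; apply: laurent_exprz; first exact/laurent_qx_poly/qx_poly_x.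
apply/laurentE; exists 1%N.
rewrite expr1 (bigD1 (Ordinal lt_i)) //= mulrCA mulKf ?x_neq0 //.
by apply: qx_polyM; [exact: qx_poly_q | apply: qx_poly_prod => j _; apply: qx_poly_x].
Qed.

Lemma laurent_Nxz i (m : int) : (i < n)%N -> laurent ((- x n i) ^ m).
Proof.
move=> lt_i; apply: laurent_exprz; rewrite ?invrN; apply: laurentN.
- by have := laurent_xz i 1 lt_i; rewrite expr1z.
- by have := laurent_xz i (-1) lt_i; rewrite exprN1.
Qed.

End LaurentPolynomials.

Lemma expfz_sum {F : fieldType} {y : F} : y != 0 ->
  forall (I : Type) (s : seq I) (P : pred I) (c : I -> int),
  y ^ (\sum_(i <- s | P i) c i) = \prod_(i <- s | P i) y ^ c i.
Proof.
by move=> y0 I s P c; elim/big_rec2: _ => [|i m p _ <-]; rewrite ?expr0z // expfzDr.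
Qed.

Lemma prod_exprz_delta {R : comUnitRingType} {n : nat} (F : nat -> nat -> R)
    (a b : nat) (e : int) : (a < n)%N -> (b < n)%N ->
  \prod_(i < n) \prod_(j < n) F i j ^ (if (a == i) && (b == j) then e else 0)
  = F a b ^ e.
Proof.
move=> lt_a lt_b; rewrite (bigD1 (Ordinal lt_a)) //= [X in _ * X]big1 ?mulr1.
  rewrite (bigD1 (Ordinal lt_b)) //= !eqxx [X in _ * X]big1 ?mulr1 // => j ne_jb.
  by have /negbTE-> : b != j by rewrite eq_sym.
move=> i ne_ia; apply: big1 => j _; have /negbTE-> : a != i by rewrite eq_sym.
exact: expr0z.
Qed.

Section Blocks.
Variable n : nat.

Lemma laurent_ind b : laurent (ind n b).
Proof. by case: b; [exact: laurent1 | exact: laurent0]. Qed.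

Lemma laurent_poch (a p : Vn n) (k : int) :
  laurent a -> laurent p -> laurent (poch a p k).
Proof.
case: k => k a_l p_l; last exact: laurent0.
apply: laurent_prod => j _; apply: laurentB; first exact: laurent1.
by apply: laurentM => //; apply: laurentX.
Qed.

Lemma laurent_gauss_ratio (b k : int) : 0 <= b ->
  laurent (poch (q n ^ (2 * (b + 1))) (q n ^ 2) k / poch (q n ^ 2) (q n ^ 2) k).
Proof.
case: b => // b _; case: k => k; last by rewrite /= mul0r; exact: laurent0.
have -> : q n ^ (2 * (Posz b + 1)) = (q n ^+ 2) ^+ b.+1.
  have -> : 2 * (Posz b + 1) = (2 * b.+1)%N :> int by lia.
  by rewrite -exprnP exprM.
exact: (poch_gauss_ratio (laurent0 n) (laurent1 n) (@laurentD n) (@laurentM n)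
                         (laurent_qz n 2)).
Qed.

Lemma laurent_gauss_ratio_inv (b k : int) : 0 <= b ->
  laurent (poch (q n ^ (2 * (b + 1))) (q n ^ 2) k / poch (q n ^ (-2)) (q n ^ (-2)) k).
Proof.
move=> b_ge0; case: k => k; last by rewrite /= mul0r; exact: laurent0.
change (q n ^ (-2)) with (q n ^+ 2)^-1.
rewrite (poch_invE _ k (expf_neq0 2 (q_neq0 n))) invfM mulrCA.
apply: laurentM; last exact: laurent_gauss_ratio.
rewrite -prodfV; apply: laurent_prod => j _; rewrite invrN invrK.
by apply/laurentN/laurentX; exact: (laurent_qz n 2).
Qed.

Lemma laurent_poscross i j a b c d : (i < n)%N -> (j < n)%N -> 0 <= b ->
  laurent (poscross n i j a b c d / z n i j).
Proof.
move=> lt_i lt_j b_ge0.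
rewrite /poscross 3!(mulrAC _ _ (z n i j)^-1) mulfK ?z_neq0 //.
rewrite -[_ * _ / poch _ _ _]mulrA.
apply: laurentM; last apply: laurentM.
- by do ![apply: laurentM | exact: laurent_ind | exact: laurent_Nxz
          | exact: laurent_qz | exact: laurent_xz].
- apply: laurent_poch; last exact: laurent_qz.
  by apply: laurentM; [exact: laurent_qz | exact: laurent_xz].
- exact: laurent_gauss_ratio_inv.
Qed.

Lemma laurent_negcross i j a b c d : (i < n)%N -> (j < n)%N -> 0 <= b ->
  laurent (negcross n i j a b c d / (z n i j)^-1).
Proof.
move=> lt_i lt_j b_ge0.
rewrite invrK /negcross 3!(mulrAC _ _ (z n i j)) mulfVK ?z_neq0 //.
rewrite -[_ * _ / poch _ _ _]mulrA.
apply: laurentM; last apply: laurentM.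
- by do ![apply: laurentM | exact: laurent_ind | exact: laurent_Nxz
          | exact: laurent_qz | exact: laurent_xz].
- apply: laurent_poch; last exact: laurent_qz.
  by apply: laurentM; [exact: laurent_qz | exact: laurent_xz].
- exact: laurent_gauss_ratio.
Qed.

End Blocks.

Lemma labAt_ge0 (D : seq event) r (lam : {ffun seg D -> 'I_r}) l p :
  0 <= labAt lam l p.
Proof. by rewrite /labAt; case: pickP. Qed.

Section Diagram.
Context {n : nat} {D : seq event} (comp : {ffun seg D -> 'I_n}).

Lemma width0_gt0 : (0 < width D 0)%N.
Proof. by rewrite /width /state take0. Qed.

Lemma components_gt0 : (0 < n)%N.
Proof.
have top : seg D := exist _ (ord0, ord0) width0_gt0.
exact: leq_ltn_trans (leq0n _) (ltn_ord (comp top)).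
Qed.

Lemma compAt_lt l p : (compAt comp l p < n)%N.
Proof. by rewrite /compAt; case: pickP => [s _|_]; rewrite ?ltn_ord ?components_gt0. Qed.

Definition ev_zfactor (l : nat) : Vn n :=
  match nth ev0 D l with
  | Xing k true => z n (compAt comp l k.+1) (compAt comp l k)
  | Xing k false => (z n (compAt comp l k) (compAt comp l k.+1))^-1
  | _ => 1
  end.

Lemma ev_zfactor_neq0 l : ev_zfactor l != 0.
Proof.
rewrite /ev_zfactor; case: (nth ev0 D l) => [k [] | k ld | k];
  by rewrite ?invr_neq0 ?z_neq0 ?oner_neq0.
Qed.

Lemma laurent_ev_weight_div r (lam : {ffun seg D -> 'I_r}) l :
  laurent (ev_weight comp lam l / ev_zfactor l).
Proof.
rewrite /ev_weight /ev_zfactor; case: (nth ev0 D l) => [k [] | k [] | k].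
- by apply: laurent_poscross; rewrite ?compAt_lt ?labAt_ge0.
- by apply: laurent_negcross; rewrite ?compAt_lt ?labAt_ge0.
- rewrite divr1; apply: laurentM; first exact: laurent_qz.
  by apply: laurent_xz; exact: compAt_lt.
- by rewrite divr1; exact: laurent1.
- rewrite divr1; case: ifP => _; first exact: laurent1.
  by apply: laurentM; [exact: laurent_qz | apply: laurent_xz; exact: compAt_lt].
Qed.

Lemma linking_prodE :
  \prod_(i < n) \prod_(j < n) z n i j ^ linking comp i j = \prod_(l < size D) ev_zfactor l.
Proof.
under eq_bigr => i _ do
  under eq_bigr => j _ do rewrite /linking (expfz_sum (z_neq0 n i j)).
under eq_bigr => i _ do rewrite exchange_big.
rewrite exchange_big; apply: eq_bigr => l _; rewrite /ev_zfactor.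
case: (nth ev0 D l) => [k [] | k ld | k].
- by rewrite (prod_exprz_delta (z n)) ?compAt_lt ?expr1z.
- by rewrite (prod_exprz_delta (z n)) ?compAt_lt ?exprN1.
- by apply: big1 => i _; apply: big1 => j _; exact: expr0z.
- by apply: big1 => i _; apply: big1 => j _; exact: expr0z.
Qed.

Definition Gx_cofactor {r : nat} (lam : {ffun seg D -> 'I_r}) : Vn n :=
  (- x n 0) ^ (r%:Z - 1) * q n ^ (((r * r.+1) %/ 2)%:Z - 1) *
  ind n ((labAt lam 0 0 == 0) && (labAt lam (size D) 0 == 0)) *
  \prod_(l < size D) (ev_weight comp lam l / ev_zfactor l).

Lemma laurent_Gx_cofactor r (lam : {ffun seg D -> 'I_r}) :
  laurent (Gx_cofactor lam).
Proof.
apply: laurentM; last by apply: laurent_prod => l _; apply: laurent_ev_weight_div.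
apply: laurentM; last exact: laurent_ind.
by apply: laurentM; [apply: laurent_Nxz; exact: components_gt0 | exact: laurent_qz].
Qed.

Lemma GxE r (lam : {ffun seg D -> 'I_r}) :
  Gx comp lam = (poch (q n ^+ 4 * x n 0 ^+ 2) (q n ^+ 2) (r%:Z - 1))^-1 *
    (\prod_(i < n) \prod_(j < n) z n i j ^ linking comp i j) * Gx_cofactor lam.
Proof.
have zfactor_out : \prod_(l < size D) ev_weight comp lam l =
    \prod_(l < size D) ev_zfactor l * \prod_(l < size D) (ev_weight comp lam l / ev_zfactor l).
  by rewrite -big_split; apply: eq_bigr => l _ /=; rewrite mulrC mulfVK ?ev_zfactor_neq0.
rewrite /Gx zfactor_out linking_prodE /dfac /Gx_cofactor; ring.
Qed.

End Diagram.

Theorem proposition2p2 (n : nat) (D : seq event) (comp : {ffun seg D -> 'I_n})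
  (r : nat) :
  valid D -> comp_ok comp -> (1 <= r)%N ->
  exists f : Vn n,
    laurent f /\
    G comp r =
      (poch (q n ^+ 4 * x n 0 ^+ 2) (q n ^+ 2) (r%:Z - 1))^-1 *
      (\prod_(i < n) \prod_(j < n) z n i j ^ linking comp i j) * f.
Proof.
(* the factorization holds summand by summand for any D, comp and r *)
move=> _ _ _.
exists (\sum_(lam : {ffun seg D -> 'I_r} | arc_labelling lam) Gx_cofactor comp lam).
split; first by apply: laurent_sum => lam _; apply: laurent_Gx_cofactor.
by rewrite /G mulr_sumr; apply: eq_bigr => lam _; apply: GxE.
Qed.
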